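(* Let $\Gamma=(V,E)$ be a graph and for each $v\in V$ let $C_v$ be a left LCM monoid. Then the graph product $C=\Gamma_{v\in V}C_v$ is also a left LCM monoid.
   Context: A graph $\Gamma=(V,E)$ consists of a set $V$ of vertices and an irreflexive symmetric relation $E\subseteq V\times V$. For monoids $C_v$ ($v\in V$, pairwise disjoint), the graph product $\Gamma_{v\in V}C_v$ is the quotient of the free product of the $C_v$ by the congruence generated by all pairs $(mn,nm)$ with $m\in C_u$, $n\in C_v$, $(u,v)\in E$. A left LCM monoid is a right cancellative monoid $C$ in which, for all $a,b\in C$, the intersection $Ca\cap Cb$ of principal left ideals is either empty or a principal left ideal $Cm$ for some $m\in C$. *)

(* Monoids are given by carrier, multiplication and unit;
   the graph product is represented by words over the disjoint union of
   the C_v modulo the congruence generated by the defining relations. *)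
From Stdlib Require Import List.
Import ListNotations.
Set Implicit Arguments.

Definition is_monoid (T : Type) (mul : T -> T -> T) (one : T) : Prop :=
  (forall a b c, mul a (mul b c) = mul (mul a b) c) /\
  (forall a, mul one a = a) /\ (forall a, mul a one = a).

(* Left LCM monoid, for a monoid presented up to an equivalence relation
   [eqv] compatible with [mul] (for an honest monoid take [eqv := eq]).
   Membership in the principal left ideal C a: *)
Definition in_left_ideal (T : Type) (eqv : T -> T -> Prop) (mul : T -> T -> T)
  (a w : T) : Prop := exists c, eqv w (mul c a).

Definition right_cancellative (T : Type) (eqv : T -> T -> Prop)
  (mul : T -> T -> T) : Prop :=
  forall a b c, eqv (mul a c) (mul b c) -> eqv a b.

Definition left_LCM (T : Type) (eqv : T -> T -> Prop) (mul : T -> T -> T) : Prop :=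
  right_cancellative eqv mul /\
  forall a b : T,
    (forall w, ~ (in_left_ideal eqv mul a w /\ in_left_ideal eqv mul b w)) \/
    (exists m, forall w,
        (in_left_ideal eqv mul a w /\ in_left_ideal eqv mul b w)
        <-> in_left_ideal eqv mul m w).

Definition is_graph (V : Type) (E : V -> V -> Prop) : Prop :=
  (forall v, ~ E v v) /\ (forall u v, E u v -> E v u).

Definition letter (V : Type) (C : V -> Type) := { v : V & C v }.

Inductive gp_rel (V : Type) (E : V -> V -> Prop) (C : V -> Type)
    (mul : forall v, C v -> C v -> C v) (one : forall v, C v)
  : list (letter C) -> list (letter C) -> Prop :=
| gp_refl x : gp_rel E mul one x x
| gp_sym x y : gp_rel E mul one x y -> gp_rel E mul one y x
| gp_trans x y z : gp_rel E mul one x y -> gp_rel E mul one y z ->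
                   gp_rel E mul one x z
| gp_ctx p q x y : gp_rel E mul one x y ->
                   gp_rel E mul one (p ++ x ++ q) (p ++ y ++ q)
| gp_one v : gp_rel E mul one [existT C v (one v)] []
| gp_mul v a b : gp_rel E mul one [existT C v a; existT C v b]
                                  [existT C v (mul v a b)]
| gp_comm u v (m : C u) (n : C v) : E u v ->
    gp_rel E mul one [existT C u m; existT C v n] [existT C v n; existT C u m].

(* An element of the graph product is encoded by its projections: for all
   non-adjacent vertices p, q (p = q allowed), the reduced word over C_p and C_q
   left after deleting all other letters.  Letters act on such families on the
   right, the defining relations act trivially, and the family yields for each v
   the last syllable of the element in C_v, the part of its C_v-letters that can
   be moved to the right end.  Peeling off last syllables shows that the family
   determines the element; since a letter of a right cancellative C_v acts
   injectively, the graph product is right cancellative.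
   For the LCM property, w lies in C (v, e) iff its last v-syllable lies in C_v e.
   A word a either does not change its last v-syllable under left multiplication,
   or equals a product of left invertible letters followed by a word over the star
   of v; in both cases C (v, e) ∩ C a comes from an LCM in C_v.  Induction on the
   length of b then gives C a ∩ C b. *)

From Stdlib Require Import List Lia Classical ClassicalEpsilon FunctionalExtensionality Eqdep.
Import ListNotations.

Section GraphProduct.
Variables (V : Type) (E : V -> V -> Prop) (C : V -> Type).
Variables (mul : forall v, C v -> C v -> C v) (one : forall v, C v).
Hypothesis E_irrefl : forall v, ~ E v v.
Hypothesis E_sym : forall u v, E u v -> E v u.
Hypothesis mulA : forall v a b c, mul v a (mul v b c) = mul v (mul v a b) c.
Hypothesis mulr1 : forall v a, mul v a (one v) = a.
Hypothesis mulIr : forall v a b c, mul v a c = mul v b c -> a = b.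

Local Notation L := (letter C).
Local Notation eqv := (gp_rel E mul one).

Lemma nE_sym u v : ~ E u v -> ~ E v u.
Proof. intros H H'; apply H, E_sym, H'. Qed.

Definition ltr (v : V) (b : C v) : L := existT C v b.
Definition ltr1 (v : V) : L := ltr v (one v).

Definition coord (v : V) (z : L) : C v :=
  match excluded_middle_informative (exists b, z = ltr v b) with
  | left H => proj1_sig (constructive_indefinite_description _ H)
  | right _ => one v
  end.

Lemma ltr_inj v b u c : ltr v b = ltr u c -> v = u.
Proof. intros H. exact (f_equal (@projT1 _ _) H). Qed.

Lemma ltr_inj2 v b c : ltr v b = ltr v c -> b = c.
Proof. intros H. apply inj_pairT2 in H. auto. Qed.

Lemma coord_ltr v b : coord v (ltr v b) = b.
Proof.
  unfold coord. destruct (excluded_middle_informative _) as [H|H].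
  - destruct (constructive_indefinite_description _ H) as [b' Hb']. simpl.
    symmetry; apply ltr_inj2; auto.
  - exfalso; apply H; eauto.
Qed.

Lemma ltr_coord v z : projT1 z = v -> z = ltr v (coord v z).
Proof. destruct z as [v' b]; simpl; intros ->. rewrite coord_ltr. reflexivity. Qed.

Definition at_vertex (v : V) (z : L) : bool :=
  if excluded_middle_informative (projT1 z = v) then true else false.
Definition restrict (v : V) (l : list L) : list L := filter (at_vertex v) l.

Lemma at_vertexT v (z : L) : projT1 z = v -> at_vertex v z = true.
Proof. unfold at_vertex; destruct (excluded_middle_informative _); auto; contradiction. Qed.
Lemma at_vertexF v (z : L) : projT1 z <> v -> at_vertex v z = false.
Proof. unfold at_vertex; destruct (excluded_middle_informative _); auto; contradiction. Qed.

Lemma restrict_app v l l' : restrict v (l ++ l') = restrict v l ++ restrict v l'.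
Proof. apply filter_app. Qed.
Lemma restrict1T v (z : L) : projT1 z = v -> restrict v [z] = [z].
Proof. intros H; unfold restrict; simpl; rewrite at_vertexT; auto. Qed.
Lemma restrict1F v (z : L) : projT1 z <> v -> restrict v [z] = [].
Proof. intros H; unfold restrict; simpl; rewrite at_vertexF; auto. Qed.

Lemma restrict_nil_notin v (l : list L) (z : L) : restrict v l = [] -> In z l -> projT1 z <> v.
Proof.
  intros H Hin Hz. assert (Hr : In z (restrict v l)) by (apply filter_In; auto using at_vertexT).
  rewrite H in Hr; contradiction.
Qed.

Lemma last_restrict v (l : list L) (d d' : L) : l <> [] -> projT1 (last l d) = v ->
  last (restrict v l) d' = last l d.
Proof.
  intros Hne Hl. rewrite (app_removelast_last d Hne), restrict_app, restrict1T by auto.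
  rewrite !last_last. reflexivity.
Qed.

Lemma restrict_removelastT v (l : list L) (d : L) : l <> [] -> projT1 (last l d) = v ->
  restrict v (removelast l) = removelast (restrict v l).
Proof.
  intros Hne Hl. rewrite (app_removelast_last d Hne) at 2.
  rewrite restrict_app, restrict1T, removelast_last; auto.
Qed.

Lemma restrict_removelastF v (l : list L) (d : L) : l <> [] -> projT1 (last l d) <> v ->
  restrict v (removelast l) = restrict v l.
Proof.
  intros Hne Hl. rewrite (app_removelast_last d Hne) at 2.
  rewrite restrict_app, restrict1F, app_nil_r; auto.
Qed.

Lemma In_last (l : list L) d : l <> [] -> In (last l d) l.
Proof. intros H. rewrite (app_removelast_last d H) at 2. apply in_or_app; right; left; auto. Qed.

Lemma In_removelast (l : list L) z : In z (removelast l) -> In z l.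
Proof.
  intros H. destruct l as [|x l']; [contradiction|].
  rewrite (app_removelast_last x (l := x :: l')) by discriminate. apply in_or_app; auto.
Qed.

Lemma last_app_ne (l l' : list L) d : l' <> [] -> last (l ++ l') d = last l' d.
Proof. intros H. rewrite (app_removelast_last d H), app_assoc, !last_last. reflexivity. Qed.

Lemma app_cons_ne (A : list L) q B : A ++ q :: B <> [].
Proof. intro H; apply app_eq_nil in H; destruct H; discriminate. Qed.

Lemma last_mid (A : list L) q B d : B <> [] -> last (A ++ q :: B) d = last B d.
Proof. intros H. rewrite last_app_ne by discriminate. destruct B; [congruence|reflexivity]. Qed.

Lemma removelast_mid (A : list L) q B : B <> [] ->
  removelast (A ++ q :: B) = A ++ q :: removelast B.
Proof. intros H. rewrite removelast_app by discriminate. destruct B; [congruence|reflexivity]. Qed.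

Definition state := V -> V -> list L.

(* Consecutive syllables of [S v v] are kept apart by a letter of a vertex w
   not adjacent to v, so they never merge. *)
Definition separated (S : state) (v : V) (A B : list L) : Prop :=
  exists w, w <> v /\ ~ E v w /\ exists A' q B',
    S v w = A' ++ q :: B' /\ restrict v A' = A /\ restrict v B' = B /\ projT1 q = w.

Record wf (S : state) : Prop := {
  wf_sym : forall p q, S p q = S q p;
  wf_letters : forall p q v b, In (ltr v b) (S p q) -> (v = p \/ v = q) /\ b <> one v;
  wf_restrict : forall v w, ~ E v w -> restrict v (S v w) = S v v;
  wf_separated : forall v A B, S v v = A ++ B -> A <> [] -> B <> [] -> separated S v A B }.

Lemma wf_vertex S p q z : wf S -> In z (S p q) -> projT1 z = p \/ projT1 z = q.
Proof. intros HS; destruct z as [v b]; intros H. apply (wf_letters _ HS) in H. simpl; tauto. Qed.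

Definition has_last_syl (v : V) (S : state) : Prop :=
  forall w, ~ E v w -> S v w <> [] /\ projT1 (last (S v w) (ltr1 v)) = v.

Definition last_syl (v : V) (S : state) : C v :=
  if excluded_middle_informative (has_last_syl v S)
  then coord v (last (S v v) (ltr1 v)) else one v.

Definition no_last_syl (u : V) (T : state) : Prop :=
  T u u = [] \/
  exists w, w <> u /\ ~ E u w /\ T u w <> [] /\ projT1 (last (T u w) (ltr1 u)) = w.

Definition touches (u p q : V) : Prop := (p = u /\ ~ E u q) \/ (q = u /\ ~ E u p).

Definition syl (v : V) (c : C v) : list L :=
  if excluded_middle_informative (c = one v) then [] else [ltr v c].

Definition strip (v : V) (S : state) : state := fun p q =>
  if excluded_middle_informative (touches v p q /\ has_last_syl v S)
  then removelast (S p q) else S p q.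

Definition push (v : V) (c : C v) (T : state) : state := fun p q =>
  if excluded_middle_informative (touches v p q) then T p q ++ syl v c else T p q.

Definition act (v : V) (a : C v) (S : state) : state :=
  push v (mul v (last_syl v S) a) (strip v S).

Lemma touches_row u w : ~ E u w -> touches u u w.
Proof. unfold touches; auto. Qed.
Lemma touches_col u w : ~ E u w -> touches u w u.
Proof. unfold touches; auto. Qed.
Lemma touches_sym u p q : touches u p q -> touches u q p.
Proof. unfold touches; tauto. Qed.
Lemma not_touches u p q : p <> u -> q <> u -> ~ touches u p q.
Proof. unfold touches; intros H H' [[? ?]|[? ?]]; auto. Qed.
Lemma not_touches_adj u v w : E u v -> ~ E v w -> ~ touches u v w.
Proof. intros H1 H2 [[-> _]|[-> H]]; [apply (E_irrefl _ H1)|apply H, H1]. Qed.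
Lemma touches_adj_excl u v p q : E u v -> touches u p q -> ~ touches v p q.
Proof.
  intros H [[-> H1]|[-> H1]] [[H2 H3]|[H2 H3]]; subst;
    solve [apply (E_irrefl _ H) | apply H1, H | apply H3, E_sym, H].
Qed.

Lemma syl_one v : syl v (one v) = [].
Proof. unfold syl; destruct (excluded_middle_informative _); tauto. Qed.
Lemma syl_ne v c : c <> one v -> syl v c = [ltr v c].
Proof. intros H; unfold syl; destruct (excluded_middle_informative _); tauto. Qed.
Lemma In_syl u c z : In z (syl u c) -> z = ltr u c /\ c <> one u.
Proof.
  unfold syl; destruct (excluded_middle_informative _); simpl; intros H; [contradiction|].
  destruct H as [H|H]; [subst; auto|contradiction].
Qed.
Lemma restrict_syl u c : restrict u (syl u c) = syl u c.
Proof. unfold syl; destruct (excluded_middle_informative _); auto. apply restrict1T; auto. Qed.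
Lemma restrict_syl_other v u c : u <> v -> restrict v (syl u c) = [].
Proof. intros H; unfold syl; destruct (excluded_middle_informative _); auto. apply restrict1F; auto. Qed.

Lemma strip_in v S p q : touches v p q -> has_last_syl v S -> strip v S p q = removelast (S p q).
Proof. intros H H'; unfold strip; destruct (excluded_middle_informative _); tauto. Qed.
Lemma strip_out v S p q : ~ touches v p q -> strip v S p q = S p q.
Proof. intros H; unfold strip; destruct (excluded_middle_informative _); tauto. Qed.
Lemma strip_id v S : ~ has_last_syl v S -> strip v S = S.
Proof.
  intros H. do 2 (apply functional_extensionality; intro).
  unfold strip; destruct (excluded_middle_informative _); tauto.
Qed.
Lemma strip_sub v S p q z : In z (strip v S p q) -> In z (S p q).
Proof. unfold strip; destruct (excluded_middle_informative _); auto using In_removelast. Qed.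

Lemma push_in v c T p q : touches v p q -> push v c T p q = T p q ++ syl v c.
Proof. intros H; unfold push; destruct (excluded_middle_informative _); tauto. Qed.
Lemma push_out v c T p q : ~ touches v p q -> push v c T p q = T p q.
Proof. intros H; unfold push; destruct (excluded_middle_informative _); tauto. Qed.
Lemma push_one u T : push u (one u) T = T.
Proof.
  do 2 (apply functional_extensionality; intro).
  unfold push; destruct (excluded_middle_informative _); auto. rewrite syl_one, app_nil_r; auto.
Qed.

Lemma last_sylT v S : has_last_syl v S -> last_syl v S = coord v (last (S v v) (ltr1 v)).
Proof. intros H; unfold last_syl; destruct (excluded_middle_informative _); tauto. Qed.
Lemma last_sylF v S : ~ has_last_syl v S -> last_syl v S = one v.
Proof. intros H; unfold last_syl; destruct (excluded_middle_informative _); tauto. Qed.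

Lemma last_syl_row u S w : wf S -> has_last_syl u S -> ~ E u w ->
  S u w = removelast (S u w) ++ [ltr u (last_syl u S)].
Proof.
  intros HS Ht Hw. destruct (Ht w Hw) as [Hne Hl].
  assert (Hlast : last (S u u) (ltr1 u) = last (S u w) (ltr1 u))
    by (rewrite <- (wf_restrict _ HS u w Hw); apply last_restrict; auto).
  rewrite (last_sylT _ _ Ht), Hlast, <- ltr_coord by auto. apply app_removelast_last; auto.
Qed.

Lemma last_syl_ne u S : wf S -> has_last_syl u S -> last_syl u S <> one u.
Proof.
  intros HS Ht. assert (Hin : In (ltr u (last_syl u S)) (S u u)).
  { rewrite (last_syl_row u S u HS Ht (E_irrefl u)). apply in_or_app; right; left; auto. }
  apply (wf_letters _ HS) in Hin. tauto.
Qed.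

Lemma no_last_sylP u S : wf S -> ~ has_last_syl u S -> no_last_syl u S.
Proof.
  intros HS Ht. apply not_all_ex_not in Ht as [w Hw].
  apply imply_to_and in Hw as [Hw Hn].
  destruct (classic (S u w = [])) as [H0|H0].
  - left. rewrite <- (wf_restrict _ HS u w Hw), H0. reflexivity.
  - right. exists w.
    assert (Hl : projT1 (last (S u w) (ltr1 u)) <> u) by tauto.
    assert (Hw' : projT1 (last (S u w) (ltr1 u)) = w)
      by (destruct (wf_vertex S u w _ HS (In_last _ (ltr1 u) H0)); tauto).
    split; [intros ->; contradiction|auto].
Qed.

Lemma no_last_syl_not u T : no_last_syl u T -> ~ has_last_syl u T.
Proof.
  intros [H|[w [Hw [HE [_ Hl]]]]] Ht.
  - destruct (Ht u (E_irrefl u)); auto.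
  - destruct (Ht w HE) as [_ H]. congruence.
Qed.

Lemma strip_sym u S p q : wf S -> strip u S p q = strip u S q p.
Proof.
  intros HS. unfold strip. rewrite (wf_sym _ HS p q).
  repeat destruct (excluded_middle_informative _); try reflexivity;
    exfalso; intuition eauto using touches_sym.
Qed.

Lemma strip_restrict u S v w : wf S -> has_last_syl u S -> ~ E v w ->
  restrict v (strip u S v w) = strip u S v v.
Proof.
  intros HS Ht Hvw. destruct (classic (v = u)) as [->|Hvu].
  - rewrite !strip_in by auto using touches_row.
    destruct (Ht w Hvw) as [Hne Hl].
    rewrite (restrict_removelastT u _ (ltr1 u)), (wf_restrict _ HS) by auto. reflexivity.
  - rewrite (strip_out u S v v) by (apply not_touches; auto).
    destruct (classic (w = u)) as [->|Hwu].
    + assert (HE : ~ E u v) by (apply nE_sym; auto). destruct (Ht v HE) as [Hne Hl].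
      rewrite strip_in, (wf_sym _ HS v u) by auto using touches_col.
      rewrite (restrict_removelastF v _ (ltr1 u)) by (auto; rewrite Hl; auto).
      rewrite <- (wf_sym _ HS v u). apply (wf_restrict _ HS); auto.
    + rewrite strip_out by (apply not_touches; auto). apply (wf_restrict _ HS); auto.
Qed.

Lemma strip_separated_self u S A B : wf S -> has_last_syl u S ->
  strip u S u u = A ++ B -> A <> [] -> B <> [] -> separated (strip u S) u A B.
Proof.
  intros HS Ht Huu HA HB.
  rewrite strip_in in Huu by auto using touches_row.
  assert (HSuu : S u u = A ++ (B ++ [ltr u (last_syl u S)]))
    by (rewrite (last_syl_row u S u HS Ht (E_irrefl u)), Huu, app_assoc; auto).
  destruct (wf_separated _ HS u A _ HSuu HA (app_cons_ne _ _ _))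
    as [w [Hwu [HE [A' [q [B' [Heq [HfA [HfB Hq]]]]]]]]].
  assert (HB' : B' <> []) by (intros ->; symmetry in HfB; revert HfB; apply app_cons_ne).
  assert (HL : projT1 (last B' (ltr1 u)) = u)
    by (rewrite <- (last_mid A' q B' _ HB'), <- Heq; apply (Ht w HE)).
  exists w; split; [auto|split; [auto|]]. exists A', q, (removelast B').
  rewrite strip_in, Heq, removelast_mid by auto using touches_row.
  repeat split; auto.
  rewrite (restrict_removelastT u _ (ltr1 u)), HfB by auto. apply removelast_last.
Qed.

Lemma strip_separated_other u v S A B : wf S -> has_last_syl u S -> v <> u ->
  strip u S v v = A ++ B -> A <> [] -> B <> [] -> separated (strip u S) v A B.
Proof.
  intros HS Ht Hvu Hvv HA HB.
  rewrite strip_out in Hvv by (apply not_touches; auto).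
  destruct (wf_separated _ HS v A B Hvv HA HB)
    as [w [Hwv [HE [A' [q [B' [Heq [HfA [HfB Hq]]]]]]]]].
  exists w; split; [auto|split; [auto|]].
  destruct (classic (w = u)) as [->|Hwu].
  - assert (HB' : B' <> []) by (intros ->; apply HB; rewrite <- HfB; reflexivity).
    assert (HL : projT1 (last B' (ltr1 u)) = u).
    { rewrite <- (last_mid A' q B' _ HB'), <- Heq, (wf_sym _ HS v u).
      apply (Ht v), nE_sym; auto. }
    exists A', q, (removelast B').
    rewrite strip_in, Heq, removelast_mid by auto using touches_col, nE_sym.
    repeat split; auto. rewrite (restrict_removelastF v _ (ltr1 u)); auto. rewrite HL; auto.
  - exists A', q, B'. rewrite strip_out by (apply not_touches; auto). auto.
Qed.

Lemma strip_wf u S : wf S -> wf (strip u S).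
Proof.
  intros HS. destruct (classic (has_last_syl u S)) as [Ht|Ht]; [|rewrite strip_id; auto].
  constructor.
  - intros; apply strip_sym; auto.
  - intros p q v b H. apply strip_sub in H. eapply wf_letters; eauto.
  - intros; apply strip_restrict; auto.
  - intros v A B Hvv HA HB. destruct (classic (v = u)) as [->|Hvu];
      [apply strip_separated_self|apply strip_separated_other]; auto.
Qed.

Lemma strip_no_last_syl u S : wf S -> no_last_syl u (strip u S).
Proof.
  intros HS. destruct (classic (has_last_syl u S)) as [Ht|Ht];
    [|rewrite strip_id; auto using no_last_sylP].
  unfold no_last_syl. rewrite strip_in by auto using touches_row.
  destruct (classic (removelast (S u u) = [])) as [H0|H0]; [left; auto|right].
  destruct (wf_separated _ HS u _ _ (last_syl_row u S u HS Ht (E_irrefl u)) H0 ltac:(discriminate))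
    as [w [Hwu [HE [A' [q [B' [Heq [HfA [HfB Hq]]]]]]]]].
  assert (HB' : B' <> []) by (intros ->; simpl in HfB; discriminate).
  assert (HL : projT1 (last B' (ltr1 u)) = u)
    by (rewrite <- (last_mid A' q B' _ HB'), <- Heq; apply (Ht w HE)).
  assert (Hf0 : restrict u (removelast B') = [])
    by (rewrite (restrict_removelastT u _ (ltr1 u)), HfB by auto; reflexivity).
  exists w. split; [auto|split; [auto|]].
  rewrite strip_in, Heq, removelast_mid by auto using touches_row.
  split; [apply app_cons_ne|]. rewrite last_app_ne by discriminate.
  (* the last letter is q, or a letter of [removelast B'], which avoids u *)
  destruct (In_last (q :: removelast B') (ltr1 u) ltac:(discriminate)) as [Hz|Hz];
    [rewrite <- Hz; auto|].
  assert (Hz' : In (last (q :: removelast B') (ltr1 u)) (S u w))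
    by (rewrite Heq; apply in_or_app; right; right; apply In_removelast; auto).
  destruct (wf_vertex _ _ _ _ HS Hz') as [Hp|Hp]; auto.
  exfalso. eapply restrict_nil_notin; eauto.
Qed.

Lemma push_sym u c T p q : wf T -> push u c T p q = push u c T q p.
Proof.
  intros HT. unfold push. rewrite (wf_sym _ HT p q).
  repeat destruct (excluded_middle_informative _); try reflexivity;
    exfalso; intuition eauto using touches_sym.
Qed.

Lemma push_letters u c T p q v b : wf T ->
  In (ltr v b) (push u c T p q) -> (v = p \/ v = q) /\ b <> one v.
Proof.
  intros HT H. unfold push in H.
  destruct (excluded_middle_informative _) as [Hi|Hi]; [|eapply wf_letters; eauto].
  apply in_app_or in H as [H|H]; [eapply wf_letters; eauto|].
  apply In_syl in H as [H1 H2]. pose proof (ltr_inj _ _ _ _ H1) as ->.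
  apply ltr_inj2 in H1 as ->. destruct Hi as [[-> _]|[-> _]]; auto.
Qed.

Lemma push_restrict u c T v w : wf T -> ~ E v w ->
  restrict v (push u c T v w) = push u c T v v.
Proof.
  intros HT Hvw. destruct (classic (v = u)) as [->|Hvu].
  - rewrite !push_in by auto using touches_row.
    rewrite restrict_app, restrict_syl, (wf_restrict _ HT); auto.
  - rewrite (push_out u c T v v) by (apply not_touches; auto).
    destruct (classic (w = u)) as [->|Hwu].
    + rewrite push_in, restrict_app, restrict_syl_other, app_nil_r
        by (auto using touches_col, nE_sym; congruence).
      apply (wf_restrict _ HT); auto.
    + rewrite push_out by (apply not_touches; auto). apply (wf_restrict _ HT); auto.
Qed.

Lemma push_separated_self u c T A B : wf T -> no_last_syl u T ->
  push u c T u u = A ++ B -> A <> [] -> B <> [] -> separated (push u c T) u A B.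
Proof.
  intros HT HN Huu HA HB. rewrite push_in in Huu by auto using touches_row.
  destruct (exists_last HB) as [B0 [z ->]].
  destruct (classic (c = one u)) as [->|Hc].
  { rewrite push_one. rewrite syl_one, app_nil_r in Huu. apply (wf_separated _ HT); auto. }
  rewrite syl_ne, app_assoc in Huu by auto. apply app_inj_tail in Huu as [Huu <-].
  destruct (classic (B0 = [])) as [->|HB0].
  - rewrite app_nil_r in Huu.
    destruct HN as [HN|[w [Hwu [HE [Hne Hl]]]]];
      [exfalso; apply HA; rewrite <- Huu, HN; reflexivity|].
    exists w; split; [auto|split; [auto|]].
    exists (removelast (T u w)), (last (T u w) (ltr1 u)), [ltr u c].
    rewrite push_in, syl_ne by auto using touches_row.
    split; [rewrite (app_removelast_last (ltr1 u) Hne) at 1; rewrite <- app_assoc; reflexivity|].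
    split; [|split; [apply restrict1T; reflexivity|auto]].
    rewrite (restrict_removelastF u _ (ltr1 u)), (wf_restrict _ HT) by (auto; rewrite Hl; auto).
    auto.
  - destruct (wf_separated _ HT u A B0 Huu HA HB0)
      as [w [Hwu [HE [A' [q [B' [Heq [HfA [HfB Hq]]]]]]]]].
    exists w; split; [auto|split; [auto|]]. exists A', q, (B' ++ [ltr u c]).
    rewrite push_in, syl_ne, Heq by auto using touches_row.
    split; [rewrite <- app_assoc; reflexivity|]. split; [auto|split; [|auto]].
    rewrite restrict_app, HfB, restrict1T; reflexivity.
Qed.

Lemma push_separated_other u v c T A B : wf T -> v <> u ->
  push u c T v v = A ++ B -> A <> [] -> B <> [] -> separated (push u c T) v A B.
Proof.
  intros HT Hvu Hvv HA HB. rewrite push_out in Hvv by (apply not_touches; auto).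
  destruct (wf_separated _ HT v A B Hvv HA HB)
    as [w [Hwv [HE [A' [q [B' [Heq [HfA [HfB Hq]]]]]]]]].
  exists w; split; [auto|split; [auto|]].
  destruct (classic (w = u)) as [->|Hwu].
  - exists A', q, (B' ++ syl u c). rewrite push_in, Heq by (apply touches_col, nE_sym; auto).
    split; [rewrite <- app_assoc; reflexivity|]. split; [auto|split; [|auto]].
    rewrite restrict_app, restrict_syl_other, app_nil_r by congruence. auto.
  - exists A', q, B'. rewrite push_out by (apply not_touches; auto). auto.
Qed.

Lemma push_wf u c T : wf T -> no_last_syl u T -> wf (push u c T).
Proof.
  intros HT HN. constructor.
  - intros; apply push_sym; auto.
  - intros; eapply push_letters; eauto.
  - intros; apply push_restrict; auto.
  - intros v A B Hvv HA HB. destruct (classic (v = u)) as [->|Hvu];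
      [apply push_separated_self|apply push_separated_other]; auto.
Qed.

Lemma act_wf u a S : wf S -> wf (act u a S).
Proof. intros HS. apply push_wf; auto using strip_wf, strip_no_last_syl. Qed.

Lemma strip_syl u S p q : wf S -> touches u p q ->
  S p q = strip u S p q ++ syl u (last_syl u S).
Proof.
  intros HS Hi. destruct (classic (has_last_syl u S)) as [Ht|Ht].
  - rewrite strip_in, syl_ne by auto using last_syl_ne.
    destruct Hi as [[-> Hq]|[-> Hp]]; [|rewrite (wf_sym _ HS p u)]; apply last_syl_row; auto.
  - rewrite strip_id, last_sylF, syl_one, app_nil_r; auto.
Qed.

Lemma has_last_syl_push u c T : c <> one u -> has_last_syl u (push u c T).
Proof.
  intros Hc w Hw. rewrite push_in, syl_ne by auto using touches_row.
  split; [apply app_cons_ne|]. rewrite last_last. reflexivity.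
Qed.

Lemma last_syl_push u c T : no_last_syl u T -> last_syl u (push u c T) = c.
Proof.
  intros HN. destruct (classic (c = one u)) as [->|Hc].
  - rewrite push_one. apply last_sylF, no_last_syl_not; auto.
  - rewrite last_sylT, push_in, syl_ne, last_last by auto using has_last_syl_push, touches_row.
    apply coord_ltr.
Qed.

Lemma strip_push u c T : no_last_syl u T -> strip u (push u c T) = T.
Proof.
  intros HN. extensionality p; extensionality q.
  destruct (classic (touches u p q)) as [Hi|Hi]; [|rewrite strip_out, push_out; auto].
  destruct (classic (c = one u)) as [->|Hc].
  - rewrite push_one, strip_id; auto using no_last_syl_not.
  - rewrite strip_in, push_in, syl_ne, removelast_last by auto using has_last_syl_push.
    reflexivity.
Qed.

Lemma last_syl_act u a S : wf S -> last_syl u (act u a S) = mul u (last_syl u S) a.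
Proof. intros HS. apply last_syl_push, strip_no_last_syl; auto. Qed.

Lemma strip_act u a S : wf S -> strip u (act u a S) = strip u S.
Proof. intros HS. apply strip_push, strip_no_last_syl; auto. Qed.

Lemma act_touch u a S p q : touches u p q ->
  act u a S p q = strip u S p q ++ syl u (mul u (last_syl u S) a).
Proof. intros H. apply push_in; auto. Qed.

Lemma act_off u a S p q : ~ touches u p q -> act u a S p q = S p q.
Proof. intros H. unfold act. rewrite push_out, strip_out; auto. Qed.

Lemma act_mul u a b S : wf S -> act u b (act u a S) = act u (mul u a b) S.
Proof.
  intros HS. unfold act at 1 3. rewrite last_syl_act, strip_act, mulA; auto.
Qed.

Lemma act_one u S : wf S -> act u (one u) S = S.
Proof.
  intros HS. extensionality p; extensionality q.
  destruct (classic (touches u p q)) as [Hi|Hi]; [|apply act_off; auto].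
  rewrite act_touch, mulr1 by auto. symmetry; apply strip_syl; auto.
Qed.

Lemma has_last_syl_local v S1 S : (forall w, ~ E v w -> S1 v w = S v w) ->
  (has_last_syl v S1 <-> has_last_syl v S).
Proof.
  intros H. unfold has_last_syl. split; intros Ht w Hw; specialize (Ht w Hw);
    [rewrite H in Ht|rewrite H]; auto.
Qed.

Lemma last_syl_local v S1 S : (forall w, ~ E v w -> S1 v w = S v w) ->
  last_syl v S1 = last_syl v S.
Proof.
  intros H. pose proof (has_last_syl_local v S1 S H) as Ht. unfold last_syl.
  destruct (excluded_middle_informative (has_last_syl v S1)),
    (excluded_middle_informative (has_last_syl v S)); try tauto.
  rewrite H; auto.
Qed.

Lemma strip_ext v S1 S p q : (has_last_syl v S1 <-> has_last_syl v S) -> S1 p q = S p q ->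
  strip v S1 p q = strip v S p q.
Proof.
  intros H Hpq. unfold strip. rewrite Hpq.
  repeat destruct (excluded_middle_informative _); tauto.
Qed.

Lemma has_last_syl_act_adj u v a S : E u v -> (has_last_syl v (act u a S) <-> has_last_syl v S).
Proof. intros H. apply has_last_syl_local. intros; apply act_off, not_touches_adj; auto. Qed.

Lemma last_syl_act_adj u v a S : E u v -> last_syl v (act u a S) = last_syl v S.
Proof. intros H. apply last_syl_local. intros; apply act_off, not_touches_adj; auto. Qed.

Lemma act_comm u v a b S : E u v -> act v b (act u a S) = act u a (act v b S).
Proof.
  intros Huv. assert (Hvu := E_sym _ _ Huv). extensionality p; extensionality q.
  destruct (classic (touches v p q)) as [Hv|Hv];
    [|destruct (classic (touches u p q)) as [Hu|Hu]].
  - assert (Hu : ~ touches u p q) by (intro Hu; exact (touches_adj_excl _ _ _ _ Huv Hu Hv)).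
    rewrite act_off with (u := u), !act_touch, last_syl_act_adj by auto.
    f_equal. apply strip_ext; [apply has_last_syl_act_adj|apply act_off]; auto.
  - rewrite act_off with (u := v), !act_touch, last_syl_act_adj by auto.
    f_equal. symmetry. apply strip_ext; [apply has_last_syl_act_adj|apply act_off]; auto.
  - rewrite !act_off; auto.
Qed.

(* The row [S v u] ends in a u-letter, so v has no last syllable. *)
Lemma last_syl_act_other u v a S : u <> v -> ~ E u v -> mul u (last_syl u S) a <> one u ->
  last_syl v (act u a S) = one v.
Proof.
  intros Huv HE Hc. apply last_sylF. intros Ht. destruct (Ht u (nE_sym _ _ HE)) as [_ Hl].
  rewrite act_touch, syl_ne, last_last in Hl by (unfold touches; auto). auto.
Qed.

Lemma act_inj u a S S' : wf S -> wf S' -> act u a S = act u a S' -> S = S'.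
Proof.
  intros HS HS' Heq.
  assert (Ht : last_syl u S = last_syl u S')
    by (apply (mulIr u _ _ a); rewrite <- !last_syl_act, Heq; auto).
  extensionality p; extensionality q.
  pose proof (f_equal (fun X => X p q) Heq) as H. simpl in H.
  destruct (classic (touches u p q)) as [Hi|Hi].
  - rewrite !act_touch, Ht in H by auto. apply app_inv_tail in H.
    rewrite (strip_syl u S p q), (strip_syl u S' p q), H, Ht; auto.
  - rewrite !act_off in H; auto.
Qed.

(** * Evaluation of words and right cancellation *)

Definition run (S : state) (r : list L) : state :=
  fold_left (fun S x => act (projT1 x) (projT2 x) S) r S.
Definition empty : state := fun _ _ => [].
Definition eval (r : list L) : state := run empty r.

Lemma empty_wf : wf empty.
Proof.
  constructor; unfold empty; auto.
  - intros p q v b [].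
  - intros v A B H HA. symmetry in H. apply app_eq_nil in H. tauto.
Qed.

Lemma run_app S r1 r2 : run S (r1 ++ r2) = run (run S r1) r2.
Proof. apply fold_left_app. Qed.

Lemma run_wf S r : wf S -> wf (run S r).
Proof. revert S; induction r as [|x r IH]; intros S HS; simpl; auto using act_wf. Qed.

Lemma eval_wf r : wf (eval r).
Proof. apply run_wf, empty_wf. Qed.

Lemma eval_snoc r v a : eval (r ++ [ltr v a]) = act v a (eval r).
Proof. unfold eval. rewrite run_app. reflexivity. Qed.

Lemma last_syl_empty u : last_syl u empty = one u.
Proof. apply last_sylF. intros Ht. destruct (Ht u (E_irrefl u)); auto. Qed.

Lemma run_gp x y : eqv x y -> forall S, wf S -> run S x = run S y.
Proof.
  induction 1; intros S HS; simpl.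
  - auto.
  - symmetry; auto.
  - rewrite IHgp_rel1, IHgp_rel2; auto.
  - rewrite !run_app, IHgp_rel; auto using run_wf.
  - apply act_one; auto.
  - apply act_mul; auto.
  - apply act_comm; auto.
Qed.

Lemma eval_gp x y : eqv x y -> eval x = eval y.
Proof. intros H. apply run_gp; auto using empty_wf. Qed.

Lemma run_inj S S' r : wf S -> wf S' -> run S r = run S' r -> S = S'.
Proof.
  revert S S'; induction r as [|x r IH]; intros S S' HS HS' H; simpl in H; auto.
  apply (act_inj (projT1 x) (projT2 x)); auto using act_wf.
Qed.

Lemma gp_app x y x' y' : eqv x y -> eqv x' y' -> eqv (x ++ x') (y ++ y').
Proof.
  intros H H'. apply gp_trans with (y ++ x').
  - exact (gp_ctx [] x' H).
  - pose proof (gp_ctx y [] H') as H2. rewrite !app_nil_r in H2. exact H2.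
Qed.
Lemma gp_appl p x y : eqv x y -> eqv (p ++ x) (p ++ y).
Proof. intros; apply gp_app; auto using gp_refl. Qed.
Lemma gp_appr p x y : eqv x y -> eqv (x ++ p) (y ++ p).
Proof. intros; apply gp_app; auto using gp_refl. Qed.

Lemma gp_snoc_one r v : eqv (r ++ [ltr1 v]) r.
Proof. rewrite <- (app_nil_r r) at 2. apply gp_appl, gp_one. Qed.

Lemma gp_snoc_mul r v a b : eqv ((r ++ [ltr v a]) ++ [ltr v b]) (r ++ [ltr v (mul v a b)]).
Proof. rewrite <- app_assoc. apply gp_appl, gp_mul. Qed.

Lemma split_last_syl_lt n : forall r u, length r <= n -> last_syl u (eval r) <> one u ->
  exists r', length r' < length r /\ eqv r (r' ++ [ltr u (last_syl u (eval r))]).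
Proof.
  induction n as [|n IH]; intros r u Hl Hne.
  { destruct r; [|simpl in Hl; lia]. exfalso; apply Hne, last_syl_empty. }
  destruct (classic (r = [])) as [->|Hr]; [exfalso; apply Hne, last_syl_empty|].
  destruct (exists_last Hr) as [r0 [[v a] ->]]. change (existT C v a) with (ltr v a) in *.
  rewrite length_app in *; simpl in *.
  assert (W : forall u', exists r', length r' <= length r0 /\
                          eqv r0 (r' ++ [ltr u' (last_syl u' (eval r0))])).
  { intros u'. destruct (classic (last_syl u' (eval r0) = one u')) as [H1|H1].
    - exists r0. split; auto. rewrite H1. apply gp_sym, gp_snoc_one.
    - destruct (IH r0 u' ltac:(lia) H1) as [r' [H2 H3]]. exists r'. split; [lia|auto]. }
  rewrite eval_snoc in *.
  destruct (classic (v = u)) as [<-|Hvu]; [|destruct (classic (E v u)) as [HE|HE]].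
  - destruct (W v) as [r' [H1 H2]]. exists r'. split; [lia|].
    rewrite last_syl_act by apply eval_wf.
    eapply gp_trans; [apply gp_appr, H2|]. apply gp_snoc_mul.
  - rewrite last_syl_act_adj in * by auto.
    destruct (IH r0 u ltac:(lia) Hne) as [r' [H1 H2]]. exists (r' ++ [ltr v a]).
    rewrite length_app; simpl. split; [lia|].
    eapply gp_trans; [apply gp_appr, H2|]. rewrite <- !app_assoc.
    apply gp_appl, gp_comm, E_sym; auto.
  - (* otherwise the new letter must cancel the last v-syllable *)
    destruct (classic (mul v (last_syl v (eval r0)) a = one v)) as [Hc|Hc];
      [|exfalso; apply Hne, last_syl_act_other; auto].
    destruct (W v) as [r1 [H1 H2]].
    assert (Hrr : eqv (r0 ++ [ltr v a]) r1).
    { eapply gp_trans; [apply gp_appr, H2|]. eapply gp_trans; [apply gp_snoc_mul|].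
      rewrite Hc. apply gp_snoc_one. }
    pose proof (eval_gp _ _ Hrr) as Hev. rewrite eval_snoc in Hev. rewrite Hev in *.
    destruct (IH r1 u ltac:(lia) Hne) as [r' [H3 H4]]. exists r'. split; [lia|].
    eapply gp_trans; eauto.
Qed.

Lemma split_last_syl r u :
  exists r', length r' <= length r /\ eqv r (r' ++ [ltr u (last_syl u (eval r))]).
Proof.
  destruct (classic (last_syl u (eval r) = one u)) as [H1|H1].
  - exists r. split; auto. rewrite H1. apply gp_sym, gp_snoc_one.
  - destruct (split_last_syl_lt (length r) r u (le_n _) H1) as [r' [H2 H3]].
    exists r'. split; [lia|auto].
Qed.

Lemma split_last_syl_snoc r v a : exists r', length r' <= length r /\
  eqv (r ++ [ltr v a]) (r' ++ [ltr v (last_syl v (eval (r ++ [ltr v a])))]).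
Proof.
  destruct (split_last_syl r v) as [r' [H1 H2]]. exists r'. split; auto.
  rewrite eval_snoc, last_syl_act by apply eval_wf.
  eapply gp_trans; [apply gp_appr, H2|]. apply gp_snoc_mul.
Qed.

Lemma eval_inj_snoc g v a h :
  (forall g' h', length g' + length h' <= length g + length h -> eval g' = eval h' -> eqv g' h') ->
  eval (g ++ [ltr v a]) = eval h -> eqv (g ++ [ltr v a]) h.
Proof.
  intros IH Hgh.
  destruct (split_last_syl_snoc g v a) as [g' [Hlg Hg]].
  destruct (split_last_syl h v) as [h' [Hlh Hh]]. rewrite <- Hgh in Hh.
  assert (Hev : eval g' = eval h').
  { apply (act_inj v (last_syl v (eval (g ++ [ltr v a])))); auto using eval_wf.
    rewrite <- !eval_snoc, <- (eval_gp _ _ Hg), <- (eval_gp _ _ Hh). auto. }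
  eapply gp_trans; [exact Hg|]. eapply gp_trans; [apply gp_appr, IH|apply gp_sym, Hh]; auto. lia.
Qed.

Lemma eval_inj_le n : forall g h, length g + length h <= n -> eval g = eval h -> eqv g h.
Proof.
  induction n as [|n IH]; intros g h Hl Hgh.
  { destruct g, h; simpl in Hl; try lia. apply gp_refl. }
  destruct (classic (g = [])) as [->|Hg].
  - destruct (classic (h = [])) as [->|Hh]; [apply gp_refl|].
    destruct (exists_last Hh) as [h0 [[v a] ->]]. rewrite length_app in Hl; simpl in Hl.
    apply gp_sym, eval_inj_snoc; auto. intros; apply IH; auto. simpl in *; lia.
  - destruct (exists_last Hg) as [g0 [[v a] ->]]. rewrite length_app in Hl; simpl in Hl.
    apply eval_inj_snoc; auto. intros; apply IH; auto. lia.
Qed.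

Lemma eval_inj g h : eval g = eval h -> eqv g h.
Proof. apply (eval_inj_le _ g h (le_n _)). Qed.

Lemma gp_rcancel g h c : eqv (g ++ c) (h ++ c) -> eqv g h.
Proof.
  intros H. apply eval_inj, (run_inj _ _ c); auto using eval_wf.
  unfold eval. rewrite <- !run_app. apply eval_gp, H.
Qed.

Lemma gp_nil_of_last_syl_le n : forall a, length a <= n ->
  (forall q, last_syl q (eval a) = one q) -> eqv a [].
Proof.
  induction n as [|n IH]; intros a Hl Ht.
  { destruct a; [apply gp_refl|simpl in Hl; lia]. }
  destruct (classic (a = [])) as [->|Ha]; [apply gp_refl|].
  destruct (exists_last Ha) as [a0 [[v e] ->]]. rewrite length_app in Hl; simpl in Hl.
  destruct (split_last_syl_snoc a0 v e) as [a1 [H1 H2]].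
  rewrite Ht in H2. assert (Ha1 := gp_trans H2 (gp_snoc_one a1 v)).
  eapply gp_trans; [exact Ha1|]. apply IH; [lia|].
  intros q. rewrite <- (eval_gp _ _ Ha1). auto.
Qed.

Lemma gp_nil_of_last_syl a : (forall q, last_syl q (eval a) = one q) -> eqv a [].
Proof. apply (gp_nil_of_last_syl_le _ a (le_n _)). Qed.

Hypothesis mul1r : forall v a, mul v (one v) a = a.
Hypothesis C_LCM : forall v, left_LCM (@eq (C v)) (mul v).

Local Notation lideal := (in_left_ideal eqv (@app L)).

Definition lcm_dichotomy (p q : list L) : Prop :=
  (forall w, ~ (lideal p w /\ lideal q w)) \/
  (exists m, forall w, lideal p w /\ lideal q w <-> lideal m w).

Lemma lideal_gp p p' w : eqv p p' -> lideal p w -> lideal p' w.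
Proof. intros H [c Hc]. exists c. eapply gp_trans; [exact Hc|]. apply gp_appl; auto. Qed.

Lemma lideal_app c p : lideal p (c ++ p).
Proof. exists c. apply gp_refl. Qed.

Lemma lideal_self p : lideal p p.
Proof. exact (lideal_app [] p). Qed.

Lemma lideal_suffix b s w : lideal (b ++ s) w -> lideal s w.
Proof. intros [c Hc]. exists (c ++ b). rewrite <- app_assoc. auto. Qed.

Lemma lideal_snoc p s w w' : eqv w (w' ++ s) -> lideal p w' -> lideal (p ++ s) w.
Proof.
  intros Hw [c Hc]. exists c. eapply gp_trans; [exact Hw|].
  rewrite app_assoc. apply gp_appr; auto.
Qed.

Lemma lideal2_app p q s w : lideal (p ++ s) w /\ lideal (q ++ s) w ->
  exists w', eqv w (w' ++ s) /\ lideal p w' /\ lideal q w'.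
Proof.
  intros [[c Hc] [d Hd]]. exists (c ++ p). split; [rewrite <- app_assoc; auto|].
  split; [apply lideal_app|]. exists d. apply (gp_rcancel _ _ s).
  rewrite <- !app_assoc. eapply gp_trans; [apply gp_sym, Hc|exact Hd].
Qed.

Lemma lcm_dichotomy_app p q s : lcm_dichotomy p q -> lcm_dichotomy (p ++ s) (q ++ s).
Proof.
  intros [Hd|[m Hm]].
  - left. intros w Hw. apply lideal2_app in Hw as [w' [_ Hw']]. exact (Hd w' Hw').
  - right. exists (m ++ s). intros w. split.
    + intros Hw. apply lideal2_app in Hw as [w' [Hw Hw']].
      apply Hm in Hw'. eapply lideal_snoc; eauto.
    + intros [g Hg]. rewrite app_assoc in Hg.
      assert (Hgm : lideal p (g ++ m) /\ lideal q (g ++ m)) by apply Hm, lideal_app.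
      split; eapply lideal_snoc; solve [eauto | apply Hgm].
Qed.

Lemma lcm_dichotomy_iff p q p' q' :
  (forall w, lideal p w /\ lideal q w <-> lideal p' w /\ lideal q' w) ->
  lcm_dichotomy p' q' -> lcm_dichotomy p q.
Proof.
  intros H [Hd|[m Hm]]; [left|right].
  - intros w Hw. apply (Hd w), H, Hw.
  - exists m. intros w. split; intros Hw; [apply Hm, H, Hw|apply H, Hm, Hw].
Qed.

Lemma lideal_ltrP u e w : lideal [ltr u e] w <-> exists d, last_syl u (eval w) = mul u d e.
Proof.
  split.
  - intros [c Hc]. exists (last_syl u (eval c)).
    rewrite (eval_gp _ _ Hc), eval_snoc, last_syl_act; auto using eval_wf.
  - intros [d Hd]. destruct (split_last_syl w u) as [w' [_ Hw]]. rewrite Hd in Hw.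
    exists (w' ++ [ltr u d]). eapply gp_trans; [exact Hw|]. apply gp_sym, gp_snoc_mul.
Qed.

Definition left_unit (z : L) : Prop := exists c, mul (projT1 z) c (projT2 z) = one (projT1 z).
Definition in_star (p : V) (z : L) : Prop := projT1 z = p \/ E p (projT1 z).
Definition off_vertex (q : V) (z : L) : bool := negb (at_vertex q z).

Lemma gp_absorb_units U : Forall left_unit U -> forall c, exists d, eqv c (d ++ U).
Proof.
  induction U as [|[v b] U IH]; intros HU c.
  - exists c. rewrite app_nil_r. apply gp_refl.
  - inversion HU as [|? ? [d0 Hd0] HU']; subst. simpl in Hd0.
    destruct (IH HU' c) as [d1 Hd1]. exists (d1 ++ [ltr v d0]).
    eapply gp_trans; [exact Hd1|]. rewrite <- app_assoc. apply gp_appl.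
    apply (gp_appr U [] [ltr v d0; ltr v b]), gp_sym.
    eapply gp_trans; [apply gp_mul|]. rewrite Hd0. apply gp_one.
Qed.

Lemma lideal_units U A w : Forall left_unit U -> lideal (U ++ A) w <-> lideal A w.
Proof.
  intros HU. split; [apply lideal_suffix|].
  intros [c Hc]. destruct (gp_absorb_units U HU c) as [d Hd]. exists d.
  eapply gp_trans; [exact Hc|]. rewrite app_assoc. apply gp_appr; auto.
Qed.

Lemma last_syl_app_adj u A c : Forall (fun z => E u (projT1 z)) A ->
  last_syl u (eval (c ++ A)) = last_syl u (eval c).
Proof.
  revert c. induction A as [|[v a] A IH]; intros c HA; [rewrite app_nil_r; auto|].
  inversion HA; subst.
  replace (c ++ existT _ v a :: A) with ((c ++ [ltr v a]) ++ A) by (rewrite <- app_assoc; auto).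
  rewrite IH, eval_snoc by auto. apply last_syl_act_adj, E_sym; auto.
Qed.

Lemma gp_comm_word q b W : Forall (fun z => E q (projT1 z)) W ->
  eqv ([ltr q b] ++ W) (W ++ [ltr q b]).
Proof.
  induction W as [|[v a] W IH]; intros HW; [apply gp_refl|].
  inversion HW; subst.
  apply (gp_trans (y := [ltr v a; ltr q b] ++ W)).
  - apply (gp_appr W [ltr q b; ltr v a]), gp_comm; auto.
  - apply (gp_appl [ltr v a] ([ltr q b] ++ W)), IH; auto.
Qed.

Fixpoint syl_prod (q : V) (B : list L) : C q :=
  match B with
  | [] => one q
  | z :: B' => if at_vertex q z then mul q (coord q z) (syl_prod q B') else syl_prod q B'
  end.

Lemma Forall_off_vertex q B : Forall (in_star q) B ->
  Forall (fun z => E q (projT1 z)) (filter (off_vertex q) B).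
Proof.
  intros HB. apply Forall_forall. intros y Hy. apply filter_In in Hy as [Hy1 Hy2].
  rewrite Forall_forall in HB. destruct (HB y Hy1) as [Hh|Hh]; auto.
  unfold off_vertex in Hy2. rewrite at_vertexT in Hy2 by auto. discriminate.
Qed.

Lemma gp_gather q B : Forall (in_star q) B ->
  eqv B (filter (off_vertex q) B ++ [ltr q (syl_prod q B)]).
Proof.
  induction B as [|z B IH]; intros HB; simpl; [apply gp_sym, gp_one|].
  inversion HB as [|? ? Hz HB']; subst. specialize (IH HB').
  unfold off_vertex at 1. destruct (classic (projT1 z = q)) as [Hzq|Hzq].
  - rewrite (at_vertexT _ _ Hzq). simpl. rewrite (ltr_coord q z Hzq) at 1.
    eapply gp_trans; [apply (gp_appl [ltr q (coord q z)]), IH|].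
    rewrite app_assoc. eapply gp_trans; [apply gp_appr, gp_comm_word, Forall_off_vertex; auto|].
    rewrite <- app_assoc. apply gp_appl, gp_mul.
  - rewrite (at_vertexF _ _ Hzq). simpl. apply (gp_appl [z]). auto.
Qed.

Lemma length_filter_off_snoc q A s :
  length (filter (off_vertex q) (A ++ [ltr q s])) <= length A.
Proof.
  rewrite filter_app. simpl. unfold off_vertex at 2. rewrite at_vertexT by reflexivity.
  simpl. rewrite app_nil_r. apply filter_length_le.
Qed.

Lemma last_syl_app_star u A : Forall (in_star u) A ->
  exists pi, forall c, last_syl u (eval (c ++ A)) = mul u (last_syl u (eval c)) pi.
Proof.
  intros HA. exists (syl_prod u A). intros c.
  rewrite (eval_gp _ _ (gp_appl c _ _ (gp_gather u A HA))), app_assoc, eval_snoc,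
    last_syl_act, last_syl_app_adj by auto using eval_wf, Forall_off_vertex.
  reflexivity.
Qed.

Lemma last_syl_act_cancels p q s S : wf S -> q <> p -> ~ E q p ->
  last_syl p (act q s S) <> one p -> mul q (last_syl q S) s = one q.
Proof. intros HS H1 H2 H3. apply NNPP. intro H4. apply H3, last_syl_act_other; auto. Qed.

(** * Stable words and star splittings *)

Definition stable (p : V) (a : list L) : Prop :=
  forall c, last_syl p (eval (c ++ a)) = last_syl p (eval a).

Definition star_split (p : V) (a : list L) : Prop :=
  exists U A, Forall left_unit U /\ Forall (in_star p) A /\ eqv a (U ++ A) /\
    length U + length A <= length a.

Lemma stable_gp p a b : eqv a b -> stable p a -> stable p b.
Proof. intros H Ha c. rewrite <- (eval_gp _ _ H), <- (eval_gp _ _ (gp_appl c _ _ H)). auto. Qed.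

Lemma stable_app p x b : stable p b -> stable p (x ++ b).
Proof. intros Hb c. rewrite app_assoc, !Hb. reflexivity. Qed.

Lemma stable_snoc p a q s : stable p a -> q = p \/ E p q -> stable p (a ++ [ltr q s]).
Proof.
  intros Ha Hq c. rewrite app_assoc, !eval_snoc.
  destruct Hq as [<-|HE].
  - rewrite !last_syl_act, Ha by apply eval_wf. reflexivity.
  - rewrite !last_syl_act_adj, Ha by (apply E_sym; auto). reflexivity.
Qed.

Lemma star_split_units p a U b : Forall left_unit U -> star_split p b ->
  eqv a (U ++ b) -> length U + length b <= length a -> star_split p a.
Proof.
  intros HU [U2 [A2 [HU2 [HA2 [Hb Hl]]]]] Hab Hlen. exists (U ++ U2), A2.
  split; [apply Forall_app; auto|split; [auto|split]].
  - rewrite <- app_assoc. eapply gp_trans; [exact Hab|apply gp_appl; auto].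
  - rewrite length_app. lia.
Qed.

Section StarSplitStep.
Variable a : list L.
Hypothesis IH : forall a' p, length a' < length a -> stable p a' \/ star_split p a'.

Lemma star_split_star p q : ~ stable p a -> q = p \/ E p q ->
  last_syl q (eval a) <> one q -> star_split p a.
Proof.
  intros Hns Hqp Hq.
  destruct (split_last_syl_lt _ a q (le_n _) Hq) as [a1 [Hl1 Ha1]].
  destruct (IH a1 p Hl1) as [H1|[U1 [A1 [HU1 [HA1 [He1 Hle1]]]]]].
  - exfalso. apply Hns. eapply stable_gp; [apply gp_sym, Ha1|]. apply stable_snoc; auto.
  - exists U1, (A1 ++ [ltr q (last_syl q (eval a))]).
    split; [auto|split; [apply Forall_app; split; [auto|constructor; [exact Hqp|constructor]]|]].
    split; [rewrite app_assoc; eapply gp_trans; [exact Ha1|apply gp_appr; auto]|].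
    rewrite length_app; simpl. lia.
Qed.

(* As c0 changes the last p-syllable, the last q-syllable s of a is cancelled
   inside c0 a; gathering the q-letters of a star splitting of the rest of a
   then exposes a left unit. *)
Lemma star_split_far p q c0 : q <> p -> ~ E p q -> last_syl q (eval a) <> one q ->
  last_syl p (eval a) = one p -> last_syl p (eval (c0 ++ a)) <> one p -> star_split p a.
Proof.
  intros Hqp HEpq Hq Htp Hc0.
  destruct (split_last_syl_lt _ a q (le_n _) Hq) as [a1 [Hl1 Ha1]].
  set (s := last_syl q (eval a)) in *.
  assert (Hs : s = mul q (last_syl q (eval a1)) s)
    by (unfold s at 1; rewrite (eval_gp _ _ Ha1), eval_snoc, last_syl_act by apply eval_wf;
        reflexivity).
  assert (Hc : mul q (last_syl q (eval (c0 ++ a1))) s = one q).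
  { apply (last_syl_act_cancels p); auto using eval_wf, nE_sym.
    rewrite <- eval_snoc, <- app_assoc, <- (eval_gp _ _ (gp_appl c0 _ _ Ha1)). auto. }
  destruct (IH a1 q Hl1) as [H1|[U1 [A1 [HU1 [HA1 [He1 Hle1]]]]]].
  { exfalso. apply Hq. rewrite Hs, <- (H1 c0). exact Hc. }
  set (B := A1 ++ [ltr q s]).
  assert (HB : Forall (in_star q) B)
    by (apply Forall_app; split; [auto|constructor; [left; reflexivity|constructor]]).
  set (Bf := filter (off_vertex q) B). set (pi := syl_prod q B).
  assert (HlBf : length Bf <= length A1) by apply length_filter_off_snoc.
  assert (Ha : eqv a (U1 ++ Bf ++ [ltr q pi])).
  { eapply gp_trans; [exact Ha1|]. eapply gp_trans; [apply gp_appr, He1|].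
    rewrite <- app_assoc. apply gp_appl, gp_gather; auto. }
  assert (Hpi : left_unit (ltr q pi)).
  { unfold left_unit, ltr; simpl. exists (last_syl q (eval ((c0 ++ U1) ++ Bf))).
    apply (last_syl_act_cancels p); auto using eval_wf, nE_sym.
    rewrite <- eval_snoc, <- !app_assoc, <- (eval_gp _ _ (gp_appl c0 _ _ Ha)). auto. }
  assert (Ha' : eqv a ((U1 ++ [ltr q pi]) ++ Bf)).
  { eapply gp_trans; [exact Ha|]. rewrite <- app_assoc.
    apply gp_appl, gp_sym, gp_comm_word, Forall_off_vertex; auto. }
  destruct (IH Bf p ltac:(lia)) as [H2|H2].
  - exfalso. apply Hc0. rewrite <- Htp.
    exact (stable_gp _ _ _ (gp_sym Ha') (stable_app _ _ _ H2) c0).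
  - apply (star_split_units _ _ (U1 ++ [ltr q pi]) Bf); auto.
    + apply Forall_app; auto.
    + rewrite length_app; simpl. lia.
Qed.

End StarSplitStep.

Lemma stable_or_star_split_le n : forall a p, length a <= n -> stable p a \/ star_split p a.
Proof.
  induction n as [|n IH]; intros a p Hl.
  { destruct a; [|simpl in Hl; lia]. right. exists [], []. repeat split; auto using gp_refl. }
  destruct (classic (stable p a)) as [Hs|Hns]; [left; auto|right].
  assert (IH' : forall a' p', length a' < length a -> stable p' a' \/ star_split p' a')
    by (intros; apply IH; lia).
  destruct (classic (exists q, (q = p \/ E p q) /\ last_syl q (eval a) <> one q))
    as [[q [Hqp Hq]]|Hstar]; [apply (star_split_star a IH' p q); auto|].
  destruct (classic (forall q, last_syl q (eval a) = one q)) as [H0|H0].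
  { exists [], []. repeat split; auto using gp_nil_of_last_syl. simpl; lia. }
  apply not_all_ex_not in H0 as [q Hq]. apply not_all_ex_not in Hns as [c0 Hc0].
  assert (Hqp : q <> p) by (intros ->; apply Hstar; eauto).
  assert (HEpq : ~ E p q) by (intro; apply Hstar; eauto).
  assert (Htp : last_syl p (eval a) = one p) by (apply NNPP; intro; apply Hstar; eauto).
  apply (star_split_far a IH' p q c0); auto. rewrite <- Htp. auto.
Qed.

Lemma stable_or_star_split a p : stable p a \/ star_split p a.
Proof. apply (stable_or_star_split_le _ a p (le_n _)). Qed.

(** * Least common left multiples *)

Lemma lcm_letter_stable u e a : stable u a -> lcm_dichotomy [ltr u e] a.
Proof.
  intros Ha. destruct (classic (exists d, last_syl u (eval a) = mul u d e)) as [Hd|Hd].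
  - right. exists a. intros w. split; [tauto|]. intros Hw. split; auto.
    apply lideal_ltrP. destruct Hw as [c Hc]. rewrite (eval_gp _ _ Hc), Ha. auto.
  - left. intros w [Hx [c Hc]]. apply Hd.
    apply lideal_ltrP in Hx. rewrite (eval_gp _ _ Hc), Ha in Hx. auto.
Qed.

(* Writing a = U A, membership of c A in C (u, e) is membership of
   (last_syl u c) pi in C_u e, so the LCM of e and pi in C_u gives the one in C. *)
Lemma lcm_letter_star u e a : star_split u a -> lcm_dichotomy [ltr u e] a.
Proof.
  intros [U [A [HU [HA [Ha _]]]]].
  apply (lcm_dichotomy_iff _ _ [ltr u e] A).
  { intros w. split; intros [Hx Hw]; split; auto.
    - apply (lideal_units U); auto. eapply lideal_gp; eauto.
    - apply (lideal_gp (U ++ A)); [apply gp_sym; auto|]. apply lideal_units; auto. }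
  destruct (last_syl_app_star u A HA) as [pi Hpi].
  destruct (proj2 (C_LCM u) e pi) as [Hdis|[l Hl]].
  { left. intros w [Hx [c Hc]]. apply lideal_ltrP in Hx as [d Hd].
    rewrite (eval_gp _ _ Hc), Hpi in Hd.
    apply (Hdis (mul u (last_syl u (eval c)) pi)). split; [exists d|exists (last_syl u (eval c))]; auto. }
  destruct (proj2 (Hl l) ltac:(exists (one u); rewrite mul1r; auto)) as [[h Hh] [k Hk]].
  right. exists ([ltr u k] ++ A). intros w. split.
  - intros [Hx [c Hc]]. apply lideal_ltrP in Hx as [d Hd].
    rewrite (eval_gp _ _ Hc), Hpi in Hd.
    destruct (proj1 (Hl _) (conj (ex_intro _ d Hd) (ex_intro _ _ eq_refl))) as [f Hf].
    rewrite Hk, mulA in Hf. apply mulIr in Hf.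
    destruct (proj2 (lideal_ltrP u k c) (ex_intro _ f Hf)) as [g Hg].
    exists g. eapply gp_trans; [exact Hc|]. rewrite app_assoc. apply gp_appr; auto.
  - intros [g Hg]. split.
    + apply lideal_ltrP. exists (mul u (last_syl u (eval g)) h).
      rewrite (eval_gp _ _ Hg), app_assoc, Hpi, eval_snoc, last_syl_act by apply eval_wf.
      rewrite <- mulA, <- Hk, Hh, mulA. reflexivity.
    + exists (g ++ [ltr u k]). rewrite <- app_assoc. auto.
Qed.

Lemma lcm_letter u e a : lcm_dichotomy [ltr u e] a.
Proof.
  destruct (stable_or_star_split a u);
    [apply lcm_letter_stable|apply lcm_letter_star]; auto.
Qed.

(* C a ∩ C (b x) = (C a ∩ C x) ∩ C (b x) = C (m' x) ∩ C (b x), where m' x is the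
   LCM of a and x given by [lcm_letter]. *)
Lemma lcm_word a b : lcm_dichotomy a b.
Proof.
  revert a. induction b as [|[v e] b IH] using rev_ind; intros a.
  { right. exists a. intros w. split; [tauto|]. intros Hw; split; auto.
    exists w. rewrite app_nil_r. apply gp_refl. }
  change (existT _ v e) with (ltr v e).
  destruct (lcm_letter v e a) as [Hd|[m Hm]].
  { left. intros w [Ha Hb]. apply (Hd w). split; eauto using lideal_suffix. }
  destruct (proj2 (Hm m) (lideal_self m)) as [[m' Hm'] _].
  apply (lcm_dichotomy_iff _ _ (m' ++ [ltr v e]) (b ++ [ltr v e]));
    [|apply lcm_dichotomy_app, IH].
  intros w. split; intros [Ha Hb]; split; auto.
  - apply (lideal_gp m); auto. apply Hm. eauto using lideal_suffix.
  - apply (proj2 (Hm w)). apply (lideal_gp (m' ++ [ltr v e])); [apply gp_sym|]; auto.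
Qed.

Lemma gp_left_LCM : left_LCM eqv (@app L).
Proof. split; [intros a b c; apply gp_rcancel|exact lcm_word]. Qed.

End GraphProduct.

Theorem theorem2p6 (V : Type) (E : V -> V -> Prop) (C : V -> Type)
    (mul : forall v, C v -> C v -> C v) (one : forall v, C v) :
  is_graph E ->
  (forall v, is_monoid (@mul v) (one v)) ->
  (forall v, left_LCM (@eq (C v)) (@mul v)) ->
  left_LCM (gp_rel E mul one) (@app (letter C)).
Proof.
  intros [Hirr Hsym] Hmon Hlcm.
  apply gp_left_LCM; auto; intros v; first [apply (Hmon v) | apply (Hlcm v)].
Qed.
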